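(* A function $g\in\mathcal{G}$ is slow-dropping if and only if there exists a sub-polynomial function $h$ such that for all $y\in\mathbb{N}$ and all $x<y$ we have $g(x)\le g(y)h(y)$.
   Context: $\mathcal{G}=\{g:\mathbb{Z}_{\ge0}\to\mathbb{R}: g(0)=0,\ g(1)=1,\ g(x)>0\ \forall x>0\}$. A function $f:\mathbb{R}_{\ge0}\to\mathbb{R}_{\ge0}$ is sub-polynomial if for every $\alpha>0$, $\lim_{x\to\infty}x^\alpha f(x)=\infty$ and $\lim_{x\to\infty}x^{-\alpha}f(x)=0$. $g$ is slow-dropping if for every $\alpha>0$ there is $N>0$ such that for all $x<y$ with $y\ge N$, $g(y)\ge g(x)/y^\alpha$. *)

From Stdlib Require Import Reals.
Open Scope R_scope.

Definition in_G (g : nat -> R) : Prop :=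
  g 0%nat = 0 /\ g 1%nat = 1 /\ (forall x : nat, (0 < x)%nat -> 0 < g x).

(* f : R_{>=0} -> R_{>=0} (modelled as R -> R, nonnegative on [0,oo)) is
   sub-polynomial: for every alpha > 0,
   lim_{x->oo} x^alpha f(x) = +oo  and  lim_{x->oo} x^{-alpha} f(x) = 0. *)
Definition sub_polynomial (f : R -> R) : Prop :=
  (forall x, 0 <= x -> 0 <= f x) /\
  (forall alpha, 0 < alpha ->
     (forall M : R, exists N : R, forall x, N <= x -> 0 < x /\ M < Rpower x alpha * f x) /\
     (forall eps, 0 < eps -> exists N : R, forall x, N <= x ->
        0 < x /\ Rabs (Rpower x (- alpha) * f x) < eps)).

Definition slow_dropping (g : nat -> R) : Prop :=
  forall alpha, 0 < alpha -> exists N : R, 0 < N /\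
    forall x y : nat, (x < y)%nat -> N <= INR y ->
      g x / Rpower (INR y) alpha <= g y.

(** Let M(n) be the largest value of g below n. Slow dropping says exactly
    that M(n) / g(n) grows more slowly than every power of n, so the
    step function h(t) = max(1, M(⌊t⌋) / g(⌊t⌋)) is sub-polynomial and
    g(x) <= g(y) h(y) for x < y by construction. Conversely, a
    sub-polynomial h is eventually below y^α, so g(x) <= g(y) h(y) gives
    g(x) / y^α <= g(y) for large y. *)

From Stdlib Require Import Reals Lra Lia ZArith.
Open Scope R_scope.

Definition nat_floor (t : R) : nat := Z.to_nat (Int_part t).

Lemma nat_floor_INR (n : nat) : nat_floor (INR n) = n.
Proof. now unfold nat_floor; rewrite Int_part_INR, Nat2Z.id. Qed.

Lemma nat_floor_spec (t : R) : 0 <= t -> t - 1 < INR (nat_floor t) <= t.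
Proof.
  intros Ht; destruct (base_Int_part t) as [Hle Hgt].
  assert (Hnn : (-1 < Int_part t)%Z) by (apply lt_IZR; lra).
  unfold nat_floor; rewrite INR_IZR_INZ, Z2Nat.id by lia; lra.
Qed.

Lemma Rpower_pos (x a : R) : 0 < Rpower x a.
Proof. apply exp_pos. Qed.

Lemma Rpower_ge_1 (x a : R) : 1 <= x -> 0 <= a -> 1 <= Rpower x a.
Proof.
  intros Hx Ha; rewrite <- (Rpower_O x) by lra; now apply Rle_Rpower.
Qed.

Lemma Rpower_unbounded (a : R) : 0 < a ->
  forall M, exists N, forall x, N <= x -> 0 < x /\ M < Rpower x a.
Proof.
  intros Ha M; exists (Rmax 1 (exp (Rabs M / a))); intros x Hx.
  pose proof (Rmax_l 1 (exp (Rabs M / a))) as H1.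
  pose proof (Rmax_r 1 (exp (Rabs M / a))) as H2.
  split; [lra|].
  assert (Hpow : Rpower (exp (Rabs M / a)) a = exp (Rabs M)).
  { unfold Rpower; rewrite ln_exp; f_equal; field; lra. }
  assert (exp (Rabs M) <= Rpower x a).
  { rewrite <- Hpow; apply Rle_Rpower_l; [lra|split; [apply exp_pos|lra]]. }
  pose proof (exp_ineq1_le (Rabs M)); pose proof (Rle_abs M); lra.
Qed.

Lemma Rpower_neg_vanishes (a : R) : 0 < a ->
  forall eps, 0 < eps -> exists N, forall x, N <= x -> 0 < x /\ Rpower x (- a) < eps.
Proof.
  intros Ha eps Heps; destruct (Rpower_unbounded a Ha (/ eps)) as [N HN].
  exists N; intros x Hx; destruct (HN x Hx) as [Hx0 Hbig]; split; [exact Hx0|].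
  rewrite Rpower_Ropp, <- (Rinv_inv eps).
  apply Rinv_lt_contravar; [|exact Hbig].
  apply Rmult_lt_0_compat; [apply Rinv_0_lt_compat, Heps|apply Rpower_pos].
Qed.

Lemma sub_polynomial_intro (h : R -> R) :
  (forall x, 0 <= x -> 1 <= h x) ->
  (forall a, 0 < a -> exists N, forall x, N <= x -> 0 < x /\ h x <= Rpower x a) ->
  sub_polynomial h.
Proof.
  intros Hge1 Hup; split; [intros x Hx; specialize (Hge1 x Hx); lra|].
  intros a Ha; split.
  - intros M; destruct (Rpower_unbounded a Ha M) as [N HN].
    exists N; intros x Hx; destruct (HN x Hx) as [Hx0 HM]; split; [exact Hx0|].
    pose proof (Hge1 x (Rlt_le _ _ Hx0)); pose proof (Rpower_pos x a); nra.
  - intros eps Heps.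
    destruct (Hup (a / 2) ltac:(lra)) as [N1 HN1].
    destruct (Rpower_neg_vanishes (a / 2) ltac:(lra) eps Heps) as [N2 HN2].
    exists (Rmax N1 N2); intros x Hx.
    destruct (HN1 x (Rle_trans _ _ _ (Rmax_l _ _) Hx)) as [Hx0 Hhx].
    destruct (HN2 x (Rle_trans _ _ _ (Rmax_r _ _) Hx)) as [_ Hsmall].
    split; [exact Hx0|].
    pose proof (Hge1 x (Rlt_le _ _ Hx0)); pose proof (Rpower_pos x (- a)).
    rewrite Rabs_pos_eq by nra.
    assert (Hsplit : Rpower x (- a) * Rpower x (a / 2) = Rpower x (- (a / 2))).
    { rewrite <- Rpower_plus; f_equal; field. }
    apply Rle_lt_trans with (Rpower x (- a) * Rpower x (a / 2)); [|lra].
    now apply Rmult_le_compat_l; [lra|].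
Qed.

Lemma sub_polynomial_lt_Rpower (h : R -> R) (a : R) :
  sub_polynomial h -> 0 < a ->
  exists N, forall x, N <= x -> 0 < x /\ h x < Rpower x a.
Proof.
  intros [Hnn Hsp] Ha; destruct (proj2 (Hsp a Ha) 1 Rlt_0_1) as [N HN].
  exists N; intros x Hx; destruct (HN x Hx) as [Hx0 Hlt]; split; [exact Hx0|].
  pose proof (Rpower_pos x a) as Hp; pose proof (Hnn x (Rlt_le _ _ Hx0)).
  pose proof (Rinv_0_lt_compat _ Hp).
  rewrite Rpower_Ropp, Rabs_pos_eq in Hlt by nra.
  apply (Rmult_lt_compat_l (Rpower x a)) in Hlt; [|exact Hp].
  now rewrite <- Rmult_assoc, Rinv_r, Rmult_1_l, Rmult_1_r in Hlt by lra.
Qed.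

Fixpoint prefix_max (g : nat -> R) (n : nat) : R :=
  match n with
  | O => 0
  | S k => Rmax (prefix_max g k) (g k)
  end.

Lemma le_prefix_max (g : nat -> R) (n x : nat) : (x < n)%nat -> g x <= prefix_max g n.
Proof.
  induction n as [|n IH]; intros Hx; [lia|]; simpl.
  destruct (Nat.eq_dec x n) as [->|Hne]; [apply Rmax_r|].
  apply Rle_trans with (prefix_max g n); [apply IH; lia|apply Rmax_l].
Qed.

Lemma prefix_max_le (g : nat -> R) (n : nat) (C : R) :
  0 <= C -> (forall x, (x < n)%nat -> g x <= C) -> prefix_max g n <= C.
Proof.
  intros HC; induction n as [|n IH]; intros Hg; simpl; [exact HC|].
  apply Rmax_lub; [apply IH; auto|apply Hg; lia].
Qed.

Section DropFactor.

Variable g : nat -> R.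
Hypothesis g_pos : forall x, (0 < x)%nat -> 0 < g x.

(* The quotient may drop below 1 (e.g. when g increases); the max with 1 supplies the lower growth bound. *)
Definition drop_factor (t : R) : R :=
  Rmax 1 (prefix_max g (nat_floor t) / g (nat_floor t)).

Lemma drop_factor_ge_1 (t : R) : 1 <= drop_factor t.
Proof. apply Rmax_l. Qed.

Lemma le_drop_factor (x y : nat) : (x < y)%nat -> g x <= g y * drop_factor (INR y).
Proof.
  intros Hxy; pose proof (g_pos y ltac:(lia)) as Hy.
  unfold drop_factor; rewrite nat_floor_INR.
  apply Rle_trans with (g y * (prefix_max g y / g y)).
  - unfold Rdiv; rewrite (Rmult_comm (prefix_max g y)), <- Rmult_assoc, Rinv_r, Rmult_1_l
      by lra.
    now apply le_prefix_max.
  - apply Rmult_le_compat_l; [lra|apply Rmax_r].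
Qed.

Lemma prefix_max_le_Rpower (a : R) : slow_dropping g -> 0 < a ->
  exists N, 0 < N /\ forall n, N <= INR n -> prefix_max g n <= g n * Rpower (INR n) a.
Proof.
  intros Hsd Ha; destruct (Hsd a Ha) as [N [HN Hdrop]]; exists N; split; [exact HN|].
  intros n Hn.
  assert (Hgn : 0 < g n) by (apply g_pos, INR_lt; simpl; lra).
  pose proof (Rpower_pos (INR n) a) as Hp.
  apply prefix_max_le; [nra|]; intros x Hx.
  specialize (Hdrop x n Hx Hn); unfold Rdiv in Hdrop.
  apply (Rmult_le_compat_r (Rpower (INR n) a)) in Hdrop; [|lra].
  now rewrite Rmult_assoc, Rinv_l, Rmult_1_r in Hdrop by lra.
Qed.

Lemma drop_factor_le_Rpower (a : R) : slow_dropping g -> 0 < a ->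
  exists N, forall t, N <= t -> 0 < t /\ drop_factor t <= Rpower t a.
Proof.
  intros Hsd Ha; destruct (prefix_max_le_Rpower a Hsd Ha) as [N [HN Hmax]].
  exists (Rmax 1 (N + 1)); intros t Ht.
  pose proof (Rmax_l 1 (N + 1)); pose proof (Rmax_r 1 (N + 1)).
  destruct (nat_floor_spec t ltac:(lra)) as [Hlo Hhi].
  unfold drop_factor; set (n := nat_floor t) in *.
  assert (Hgn : 0 < g n) by (apply g_pos, INR_lt; simpl; lra).
  assert (Hpow : Rpower (INR n) a <= Rpower t a) by (apply Rle_Rpower_l; lra).
  split; [lra|]; apply Rmax_lub; [apply Rpower_ge_1; lra|].
  apply Rle_trans with (Rpower (INR n) a); [|exact Hpow].
  apply (Rmult_le_reg_l (g n)); [exact Hgn|].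
  unfold Rdiv; rewrite (Rmult_comm (prefix_max g n)), <- Rmult_assoc, Rinv_r, Rmult_1_l
    by lra.
  apply Hmax; lra.
Qed.

Lemma drop_factor_sub_polynomial : slow_dropping g -> sub_polynomial drop_factor.
Proof.
  intros Hsd; apply sub_polynomial_intro.
  - intros x _; apply drop_factor_ge_1.
  - intros a Ha; now apply drop_factor_le_Rpower.
Qed.

Lemma slow_dropping_of_sub_polynomial_bound (h : R -> R) :
  sub_polynomial h -> (forall y x : nat, (x < y)%nat -> g x <= g y * h (INR y)) ->
  slow_dropping g.
Proof.
  intros Hh Hbound a Ha; destruct (sub_polynomial_lt_Rpower h a Hh Ha) as [N HN].
  exists (Rmax 1 N); split; [pose proof (Rmax_l 1 N); lra|]; intros x y Hxy Hy.
  destruct (HN (INR y) (Rle_trans _ _ _ (Rmax_r _ _) Hy)) as [_ Hlt].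
  pose proof (g_pos y ltac:(lia)) as Hgy; pose proof (Rpower_pos (INR y) a) as Hp.
  specialize (Hbound y x Hxy).
  apply (Rmult_le_reg_r (Rpower (INR y) a)); [exact Hp|].
  unfold Rdiv; rewrite Rmult_assoc, Rinv_l, Rmult_1_r by lra; nra.
Qed.

End DropFactor.

Theorem proposition15 (g : nat -> R) (hg : in_G g) :
  slow_dropping g <->
  exists h : R -> R, sub_polynomial h /\
    forall y x : nat, (x < y)%nat -> g x <= g y * h (INR y).
Proof.
  destruct hg as [_ [_ g_pos]]; split.
  - intros Hsd; exists (drop_factor g); split.
    + now apply drop_factor_sub_polynomial.
    + intros y x; now apply le_drop_factor.
  - intros [h [Hh Hbound]]; now apply (slow_dropping_of_sub_polynomial_bound g g_pos h).
Qed.
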